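(* Suppose $c_1\ge-1$, $c_2\ge-1$, $c_3>\bar c_3(c_1,c_2)$. Let $U^+$ be the real analytic solution, on some interval $(-1,-1+\delta)$, of $(1-x^2)U'+2xU+\frac12U^2=P_c(x)$ given by a power series $\tau_2(c_1)+\sum_{n\ge1}a_n(1+x)^n$ (so $U^+(-1)=\tau_2(c_1)$). Then $U^+$ extends to a solution of the equation in $(-1,1)$ and $U^+(1)=\tau_2'(c_2)$. Similarly, let $U^-$ be the real analytic solution on some interval $(1-\delta,1)$ given by a power series $\tau_1'(c_2)+\sum_{n\ge1}b_n(1-x)^n$ (so $U^-(1)=\tau_1'(c_2)$). Then $U^-$ extends to a solution in $(-1,1)$ and $U^-(-1)=\tau_1(c_1)$. Moreover $U^-<U^+$ in $(-1,1)$.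
   Context: $P_c(x):=c_1(1-x)+c_2(1+x)+c_3(1-x^2)$ for $c=(c_1,c_2,c_3)$; $\bar c_3(c_1,c_2):=-\frac12(\sqrt{1+c_1}+\sqrt{1+c_2})(\sqrt{1+c_1}+\sqrt{1+c_2}+2)$. $\tau_1(c_1):=2-2\sqrt{1+c_1}$, $\tau_2(c_1):=2+2\sqrt{1+c_1}$, $\tau_1'(c_2):=-2-2\sqrt{1+c_2}$, $\tau_2'(c_2):=-2+2\sqrt{1+c_2}$. For $c_1\ge-1$ there is a unique power-series (real analytic) local solution near $x=-1$ with value $\tau_2(c_1)$ at $-1$, and for $c_2\ge-1$ a unique one near $x=1$ with value $\tau_1'(c_2)$ at $1$. Boundary values $U(\pm1)$ denote one-sided limits. *)

From Stdlib Require Import Reals Lra.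
From Coquelicot Require Import Coquelicot.
Open Scope R_scope.

Definition Pc (c1 c2 c3 x : R) : R :=
  c1 * (1 - x) + c2 * (1 + x) + c3 * (1 - x ^ 2).

Definition c3bar (c1 c2 : R) : R :=
  - / 2 * (sqrt (1 + c1) + sqrt (1 + c2)) * (sqrt (1 + c1) + sqrt (1 + c2) + 2).

Definition tau1 (c1 : R) : R := 2 - 2 * sqrt (1 + c1).
Definition tau2 (c1 : R) : R := 2 + 2 * sqrt (1 + c1).
Definition tau1' (c2 : R) : R := - 2 - 2 * sqrt (1 + c2).
Definition tau2' (c2 : R) : R := - 2 + 2 * sqrt (1 + c2).

Definition solves_on (c1 c2 c3 : R) (U : R -> R) (a b : R) : Prop :=
  forall x, a < x < b ->
    exists d, is_derive U x d /\
      (1 - x ^ 2) * d + 2 * x * U x + / 2 * (U x) ^ 2 = Pc c1 c2 c3 x.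

(* With [s_i = sqrt (1 + c_i)] and [B = (c3 - c3bar c1 c2) / 2 > 0], the substitution
   [U x = U0 x + 2 (1 + x) R ((1 + x) / 2)], [U0 x = (1 + s1) (1 - x) - (1 + s2) (1 + x)],
   turns the equation into the Riccati equation
   [t (1 - t) R' = (1 - t) B - R ((1 + s1) - (1 + s1 + s2) t) - t R^2],
   which is solved by [R = (1 - t) F' / F] for the Gauss function
   [F = 2F1(α, β; 1 + s1; t)] with [α + β = 1 + s1 + s2] and [α β = B].
   Since [F] has positive Taylor coefficients and radius of convergence 1, [R > 0]
   on [[0, 1)], and this gives an explicit solution [U+ > U0] on [(-1, 1)] with
   [U+ (-1) = tau2 c1]; a comparison argument for the Riccati equation shows
   [R t -> s2] as [t -> 1], i.e. [U+ (1) = tau2' c2]. A solution with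
   [U x = tau2 c1 + O(1 + x)] near [-1] is unique, by a Gronwall estimate for the
   difference of two solutions whose singular coefficient is bounded above because
   [tau2 c1 >= 2]. The symmetry [U x -> - U (- x)] exchanges [c1] and [c2] and gives
   [U-] with [U- < U0 < U+]. *)

From Stdlib Require Import Reals Lra.
From Coquelicot Require Import Coquelicot.
Open Scope R_scope.

Lemma Derive_eta (f : R -> R) x l : is_derive f x l -> Derive (fun y : R => f y) x = l.
Proof. apply is_derive_unique. Qed.

Lemma continuity_pt_of_is_derive (f : R -> R) x l : is_derive f x l -> continuity_pt f x.
Proof.
  intros hf. apply continuity_pt_filterlim, (@ex_derive_continuous R_AbsRing).
  now exists l.
Qed.

Lemma is_derive_lipschitz_at (f : R -> R) x l : is_derive f x l ->
  exists M d, 0 < d /\ forall y, Rabs (y - x) < d -> Rabs (f y - f x) <= M * Rabs (y - x).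
Proof.
  intros hf.
  destruct (proj1 (is_derive_Reals f x l) hf 1 Rlt_0_1) as [[d hd] hder].
  exists (Rabs l + 1), d. split; [exact hd|]. intros y hy.
  destruct (Req_dec y x) as [-> | hne].
  { rewrite !Rminus_diag, Rabs_R0. lra. }
  specialize (hder (y - x) ltac:(lra) hy). replace (x + (y - x)) with y in hder by ring.
  replace (f y - f x) with ((f y - f x) / (y - x) * (y - x)) by (field; lra).
  rewrite Rabs_mult. apply Rmult_le_compat_r; [apply Rabs_pos|].
  pose proof (Rabs_triang_inv ((f y - f x) / (y - x)) l). lra.
Qed.

Lemma derive_nonpos_le (f df : R -> R) p q : p <= q ->
  (forall s, p <= s <= q -> is_derive f s (df s)) ->
  (forall s, p <= s <= q -> df s <= 0) -> f q <= f p.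
Proof.
  intros hpq hf hdf.
  destruct (MVT_gen f p q df) as [c [hc hmvt]];
    rewrite ?Rmin_left, ?Rmax_right in * by lra.
  - intros s hs. apply hf. lra.
  - intros s hs. apply (continuity_pt_of_is_derive _ _ _ (hf s hs)).
  - specialize (hdf c hc). nra.
Qed.

Lemma gronwall (f df : R -> R) K a b : a <= b ->
  (forall s, a <= s <= b -> is_derive f s (df s)) ->
  (forall s, a <= s <= b -> df s <= K * f s) ->
  f b <= f a * exp (K * (b - a)).
Proof.
  intros hab hf hdf.
  assert (hmono : f b * exp (- K * b) <= f a * exp (- K * a)).
  { apply (derive_nonpos_le (fun s => f s * exp (- K * s))
             (fun s => (df s - K * f s) * exp (- K * s))); [exact hab | |].
    - intros s hs. specialize (hf s hs). auto_derive; [now exists (df s) |].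
      rewrite (Derive_eta _ _ _ hf). ring.
    - intros s hs. specialize (hdf s hs). pose proof (exp_pos (- K * s)). nra. }
  replace (K * (b - a)) with (- K * a + K * b) by ring.
  rewrite exp_plus.
  replace (f b) with (f b * exp (- K * b) * exp (K * b))
    by (rewrite Rmult_assoc, <- exp_plus; replace (- K * b + K * b) with 0 by ring;
        rewrite exp_0; ring).
  pose proof (exp_pos (K * b)). nra.
Qed.

(* At a maximum point [m] of [f] on [[p, q]] with [f m >= L] we would have
   [df m < 0], so [f] would be larger just to the left of [m]. *)
Lemma derive_neg_stays_below (f df : R -> R) p q L : p <= q ->
  (forall s, p <= s <= q -> is_derive f s (df s)) ->
  (forall s, p <= s <= q -> L <= f s -> df s < 0) -> f p < L -> f q < L.
Proof.
  intros hpq hf hdf hp.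
  destruct (Rlt_or_le (f q) L) as [hq | hq]; [exact hq | exfalso].
  destruct (continuity_ab_maj f p q hpq) as [m [hmax hm]].
  { intros s hs. exact (continuity_pt_of_is_derive _ _ _ (hf s hs)). }
  assert (hLm : L <= f m) by (specialize (hmax q ltac:(lra)); lra).
  assert (hpm : p < m) by (destruct (Req_dec m p); subst; lra).
  specialize (hdf m hm hLm).
  destruct (proj1 (is_derive_Reals f m (df m)) (hf m hm) (- df m / 2) ltac:(lra))
    as [[d hd] hder]; simpl in hder.
  set (h := - Rmin (d / 2) ((m - p) / 2)).
  assert (hh : - h <= d / 2 /\ - h <= (m - p) / 2 /\ 0 < - h).
  { unfold h; rewrite Ropp_involutive.
    split; [apply Rmin_l | split; [apply Rmin_r | apply Rmin_pos; lra]]. }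
  specialize (hder h ltac:(lra) ltac:(rewrite Rabs_left; lra)).
  specialize (hmax (m + h) ltac:(lra)).
  apply Rabs_def2 in hder.
  assert (0 <= (f (m + h) - f m) / h).
  { replace ((f (m + h) - f m) / h) with ((f m - f (m + h)) / (- h)) by (field; lra).
    apply Rdiv_le_0_compat; lra. }
  lra.
Qed.

Lemma at_left_of_interval (P : R -> Prop) T b : T < b ->
  (forall t, T <= t < b -> P t) -> at_left b P.
Proof.
  intros hT hP. assert (hd : 0 < b - T) by lra.
  exists (mkposreal _ hd). intros t ht htb. apply hP.
  change (Rabs (t - b) < b - T) in ht. apply Rabs_def2 in ht. lra.
Qed.

Lemma at_right_of_interval (P : R -> Prop) a T : a < T ->
  (forall t, a < t <= T -> P t) -> at_right a P.
Proof.
  intros hT hP. assert (hd : 0 < T - a) by lra.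
  exists (mkposreal _ hd). intros t ht hat. apply hP.
  change (Rabs (t - a) < T - a) in ht. apply Rabs_def2 in ht. lra.
Qed.

(* While [f >= L], [f t - delta * ln (b - t)] cannot increase, and
   [- ln (b - t)] tends to [+oo]. *)
Lemma at_left_lt_of_drift (f df : R -> R) t0 b L delta : t0 < b -> 0 < delta ->
  (forall t, t0 <= t < b -> is_derive f t (df t)) ->
  (forall t, t0 <= t < b -> L <= f t -> df t <= - (delta / (b - t))) ->
  at_left b (fun t => f t < L).
Proof.
  intros ht0 hdelta hf hdf.
  assert (below : forall p q, t0 <= p <= q -> q < b -> f p < L -> f q < L).
  { intros p q hp hq. apply derive_neg_stays_below with df; [lra | |].
    - intros s hs. apply hf. lra.
    - intros s hs hL. specialize (hdf s ltac:(lra) hL).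
      assert (0 < delta / (b - s)) by (apply Rdiv_lt_0_compat; lra). lra. }
  set (K := Rmax 0 ((f t0 - L) / delta) + 1).
  assert (hK : f t0 - L < delta * K).
  { unfold K. pose proof (Rmax_r 0 ((f t0 - L) / delta)).
    apply Rle_lt_trans with (delta * Rmax 0 ((f t0 - L) / delta)); [|lra].
    replace (f t0 - L) with (delta * ((f t0 - L) / delta)) at 1 by (field; lra).
    apply Rmult_le_compat_l; lra. }
  assert (hK0 : 0 < K) by (unfold K; pose proof (Rmax_l 0 ((f t0 - L) / delta)); lra).
  set (T := b - (b - t0) * exp (- K)).
  assert (hbT : b - T = (b - t0) * exp (- K)) by (unfold T; ring).
  assert (hexp : 0 < exp (- K) < 1).
  { split; [apply exp_pos|]. rewrite <- exp_0. apply exp_increasing. lra. }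
  assert (hT : t0 < T < b) by (split; nra).
  assert (hfT : f T < L).
  { destruct (Rlt_or_le (f T) L) as [h | hge]; [exact h | exfalso].
    assert (above : forall s, t0 <= s <= T -> L <= f s).
    { intros s hs. destruct (Rlt_or_le (f s) L) as [hs' | hs']; [|exact hs'].
      specialize (below s T ltac:(lra) ltac:(lra) hs'). lra. }
    assert (hmono : f T - delta * ln (b - T) <= f t0 - delta * ln (b - t0)).
    { apply (derive_nonpos_le (fun s => f s - delta * ln (b - s))
               (fun s => df s + delta / (b - s))); [lra | |].
      - intros s hs. specialize (hf s ltac:(lra)). auto_derive.
        + split; [now exists (df s) | lra].
        + rewrite (Derive_eta _ _ _ hf). field. lra.
      - intros s hs. specialize (hdf s ltac:(lra) (above s hs)). cbv beta. lra. }
    rewrite hbT, ln_mult, ln_exp in hmono by lra. nra. }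
  apply (at_left_of_interval _ T); [lra|].
  intros t ht. destruct (Req_dec t T) as [-> | hne]; [exact hfT |].
  apply (below T t); lra.
Qed.

Lemma Rdiv_le_opp_div x y p q : x <= - y -> 0 <= y -> 0 < p <= q -> x / p <= - (y / q).
Proof.
  intros hx hy hpq.
  apply Rle_trans with (- y / p).
  - apply Rmult_le_compat_r; [apply Rlt_le, Rinv_0_lt_compat|]; lra.
  - assert (y / q <= y / p) by (apply Rmult_le_compat_l; [lra | apply Rinv_le_contravar; lra]).
    unfold Rdiv in *. lra.
Qed.

Lemma exists_small_scale K c : 0 < K -> 0 < c -> exists eta, 0 < eta <= 1 / 2 /\ eta * K <= c.
Proof.
  intros hK hc. exists (Rmin (1 / 2) (c / K)).
  split; [split; [apply Rmin_pos; [lra | apply Rdiv_lt_0_compat; lra] | apply Rmin_l]|].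
  apply Rle_trans with (c / K * K).
  - apply Rmult_le_compat_r; [lra | apply Rmin_r].
  - right. field. lra.
Qed.

Lemma filterlim_at_left_continuous (f : R -> R) a : ex_derive f a ->
  filterlim f (at_left a) (locally (f a)).
Proof.
  intros hf. apply (filterlim_filter_le_1 (F := locally a)); [now apply filter_le_within |].
  exact (@ex_derive_continuous R_AbsRing _ f a hf).
Qed.

Lemma filterlim_at_left_avg a : filterlim (fun x => (a + x) / 2) (at_left a) (at_left a).
Proof.
  intros P [d hP]. exists d. intros x hx hxa. apply hP; [|lra].
  change (Rabs (x - a) < d) in hx. change (Rabs ((a + x) / 2 - a) < d).
  replace ((a + x) / 2 - a) with ((x - a) / 2) by field.
  unfold Rdiv. rewrite Rabs_mult, (Rabs_pos_eq (/ 2)) by lra. pose proof (Rabs_pos (x - a)). lra.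
Qed.

Lemma CV_radius_pos_of_is_pseries (a : nat -> R) x l : 0 < x -> is_pseries a x l ->
  Rbar_lt 0 (CV_radius a).
Proof.
  intros hx hl.
  assert (hterms : is_lim_seq (fun n => a n * x ^ n) 0).
  { apply ex_series_lim_0. exists l.
    eapply is_series_ext; [|exact hl]. intro n.
    now rewrite pow_n_pow, Rmult_comm. }
  destruct (filterlim_bounded _ (ex_intro _ 0 hterms)) as [M hM].
  apply Rbar_lt_le_trans with x; [exact hx|].
  apply (proj1 (CV_radius_bounded a)). now exists M.
Qed.

Lemma PSeries_ge_head (a : nat -> R) x : (forall n, 0 <= a n) -> 0 <= x ->
  Rbar_lt (Rabs x) (CV_radius a) -> a 0%nat <= PSeries a x.
Proof.
  intros ha hx hr.
  rewrite PSeries_decr_1 by now apply CV_radius_inside.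
  enough (0 <= PSeries (PS_decr_1 a) x) by nra.
  rewrite <- (PSeries_const_0 x). unfold PSeries. apply Series_le.
  - intro n. rewrite Rmult_0_l. split; [lra|].
    apply Rmult_le_pos; [apply ha | apply pow_le, hx].
  - apply ex_series_ext with (fun k => scal (pow_n x k) (PS_decr_1 a k)).
    { intro k. now rewrite pow_n_pow, Rmult_comm. }
    apply (CV_radius_inside (PS_decr_1 a)). now rewrite CV_radius_decr_1.
Qed.

Section Gauss.

Variables A B C : R.
Hypotheses (hA : 0 <= A) (hB : 0 < B) (hC : 0 < C).

(* Taylor coefficients of the Gauss function 2F1(α, β; C; t) with α + β = A and
   α β = B; α and β themselves need not be real. *)
Fixpoint gauss_coef (n : nat) : R :=
  match n with
  | O => 1
  | S k => gauss_coef k * (INR k ^ 2 + A * INR k + B) / ((INR k + 1) * (INR k + C))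
  end.

Lemma gauss_coef_pos n : 0 < gauss_coef n.
Proof.
  induction n as [|k IH]; simpl gauss_coef; [lra|].
  pose proof (pos_INR k).
  apply Rdiv_lt_0_compat; apply Rmult_lt_0_compat; nra.
Qed.

(* With [u = 1 / (n + 1)] the coefficient ratio is [g u], and [g 0 = 1]. *)
Lemma is_lim_seq_gauss_coef_ratio :
  is_lim_seq (fun n => Rabs (gauss_coef (S n) / gauss_coef n)) 1.
Proof.
  set (g u := ((1 - u) ^ 2 + A * u * (1 - u) + B * u ^ 2) / (1 + (C - 1) * u)).
  assert (hu : is_lim_seq (fun n => / INR (S n)) 0).
  { apply (is_lim_seq_incr_1 (fun n => / INR n)).
    exact (is_lim_seq_inv _ _ is_lim_seq_INR ltac:(discriminate)). }
  assert (hg : continuity_pt g 0).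
  { apply continuity_pt_filterlim, (@ex_derive_continuous R_AbsRing).
    unfold g. auto_derive. lra. }
  replace 1 with (g 0) by (unfold g; field).
  apply (is_lim_seq_ext (fun n => g (/ INR (S n)))); [| exact (is_lim_seq_continuous _ _ _ hg hu)].
  intro n. rewrite Rabs_pos_eq.
  - simpl gauss_coef. rewrite S_INR. pose proof (pos_INR n). pose proof (gauss_coef_pos n).
    unfold g. field. nra.
  - apply Rlt_le, Rdiv_lt_0_compat; apply gauss_coef_pos.
Qed.

Lemma CV_radius_gauss_coef : CV_radius gauss_coef = 1.
Proof.
  rewrite <- Rinv_1. apply CV_radius_finite_DAlembert; [|lra|].
  - intro n. apply Rgt_not_eq, gauss_coef_pos.
  - exact is_lim_seq_gauss_coef_ratio.
Qed.

Lemma Rabs_lt_CV_radius_gauss_coef t : -1 < t < 1 -> Rbar_lt (Rabs t) (CV_radius gauss_coef).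
Proof. intros ht. rewrite CV_radius_gauss_coef. simpl. apply Rabs_def1; lra. Qed.

Definition gauss t := PSeries gauss_coef t.
Definition gauss' t := PSeries (PS_derive gauss_coef) t.
Definition gauss'' t := PSeries (PS_derive (PS_derive gauss_coef)) t.

Lemma is_derive_gauss t : -1 < t < 1 -> is_derive gauss t (gauss' t).
Proof. intros ht. now apply is_derive_PSeries, Rabs_lt_CV_radius_gauss_coef. Qed.

Lemma is_derive_gauss' t : -1 < t < 1 -> is_derive gauss' t (gauss'' t).
Proof.
  intros ht. apply is_derive_PSeries.
  rewrite CV_radius_derive. now apply Rabs_lt_CV_radius_gauss_coef.
Qed.

Lemma gauss_ge1 t : 0 <= t < 1 -> 1 <= gauss t.
Proof.
  intros ht. apply (PSeries_ge_head gauss_coef); [| lra | apply Rabs_lt_CV_radius_gauss_coef; lra].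
  intro n. apply Rlt_le, gauss_coef_pos.
Qed.

Lemma gauss'_pos t : 0 <= t < 1 -> 0 < gauss' t.
Proof.
  intros ht. apply Rlt_le_trans with (PS_derive gauss_coef 0).
  - apply Rmult_lt_0_compat; [apply lt_0_INR, Nat.lt_0_1 | apply gauss_coef_pos].
  - apply (PSeries_ge_head (PS_derive gauss_coef)); [| lra |].
    + intro n. apply Rmult_le_pos; [apply pos_INR | apply Rlt_le, gauss_coef_pos].
    + rewrite CV_radius_derive. apply Rabs_lt_CV_radius_gauss_coef; lra.
Qed.

(* Written as [t F'' + C F' = t^2 F'' + (A + 1) t F' + B F], both sides have
   [n]-th Taylor coefficient [(n + 1) (n + C) c_(n+1) = (n^2 + A n + B) c_n]. *)
Lemma gauss_ode t : -1 < t < 1 ->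
  t * (1 - t) * gauss'' t + (C - (A + 1) * t) * gauss' t - B * gauss t = 0.
Proof.
  intros ht.
  assert (coef : forall n, (INR n + 1) * (INR n + C) * gauss_coef (S n)
                           = (INR n ^ 2 + A * INR n + B) * gauss_coef n).
  { intro n. simpl gauss_coef. pose proof (pos_INR n). field. nra. }
  assert (inside : forall a, CV_radius a = CV_radius gauss_coef -> is_pseries a t (PSeries a t)).
  { intros a ha. apply PSeries_correct, CV_radius_inside.
    rewrite ha. now apply Rabs_lt_CV_radius_gauss_coef. }
  assert (h0 := inside gauss_coef eq_refl).
  assert (h1 := inside (PS_derive gauss_coef) (CV_radius_derive _)).
  assert (h2 := inside (PS_derive (PS_derive gauss_coef))
                  (eq_trans (CV_radius_derive _) (CV_radius_derive _))).
  fold (gauss t) (gauss' t) (gauss'' t) in h0, h1, h2.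
  set (c := gauss_coef) in *. clearbody c.
  assert (lhs : is_pseries (fun n => (INR n + 1) * (INR n + C) * c (S n)) t
                  (t * gauss'' t + C * gauss' t)).
  { eapply is_pseries_ext; [| apply (is_pseries_plus _ _ _ _ _
      (is_pseries_incr_1 _ _ _ h2) (is_pseries_scal C _ t _ (Rmult_comm t C) h1))].
    intros [|n]; unfold PS_plus, PS_scal, PS_incr_1, PS_derive, plus, scal, mult, zero;
      cbn -[INR]; rewrite ?S_INR; simpl; ring. }
  assert (rhs : is_pseries (fun n => (INR n ^ 2 + A * INR n + B) * c n) t
                  (t * (t * gauss'' t) + (A + 1) * (t * gauss' t) + B * gauss t)).
  { eapply is_pseries_ext; [| apply (is_pseries_plus _ _ _ _ _
      (is_pseries_plus _ _ _ _ _
        (is_pseries_incr_1 _ _ _ (is_pseries_incr_1 _ _ _ h2))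
        (is_pseries_scal (A + 1) _ t _ (Rmult_comm t (A + 1)) (is_pseries_incr_1 _ _ _ h1)))
      (is_pseries_scal B _ t _ (Rmult_comm t B) h0))].
    intros [|[|n]]; unfold PS_plus, PS_scal, PS_incr_1, PS_derive, plus, scal, mult, zero;
      cbn -[INR]; rewrite ?S_INR; simpl; ring. }
  apply is_pseries_unique in lhs. apply is_pseries_unique in rhs.
  rewrite (PSeries_ext _ _ _ coef) in lhs. lra.
Qed.

End Gauss.

Section Ratio.

Variables s1 s2 B : R.
Hypotheses (hs1 : 0 <= s1) (hs2 : 0 <= s2) (hB : 0 < B).

Let hA : 0 <= 1 + s1 + s2.
Proof. lra. Qed.

Let hC : 0 < 1 + s1.
Proof. lra. Qed.

Definition ratio t :=
  (1 - t) * gauss' (1 + s1 + s2) B (1 + s1) t / gauss (1 + s1 + s2) B (1 + s1) t.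

Definition riccati t r := (1 - t) * B - r * ((1 + s1) - (1 + s1 + s2) * t) - t * r ^ 2.

Lemma ratio_pos t : 0 <= t < 1 -> 0 < ratio t.
Proof.
  intros ht. unfold ratio.
  pose proof (gauss_ge1 _ _ _ hA hB hC t ht).
  pose proof (gauss'_pos _ _ _ hA hB hC t ht).
  apply Rdiv_lt_0_compat; [apply Rmult_lt_0_compat|]; lra.
Qed.

Lemma ex_derive_ratio t : 0 <= t < 1 -> ex_derive ratio t.
Proof.
  intros ht. unfold ratio.
  pose proof (gauss_ge1 _ _ _ hA hB hC t ht).
  pose proof (is_derive_gauss _ _ _ hA hB hC t ltac:(lra)).
  pose proof (is_derive_gauss' _ _ _ hA hB hC t ltac:(lra)).
  auto_derive. repeat split; try (eexists; eassumption). lra.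
Qed.

Lemma is_derive_ratio_riccati t : 0 < t < 1 ->
  is_derive ratio t (riccati t (ratio t) / (t * (1 - t))).
Proof.
  intros ht. unfold ratio, riccati.
  pose proof (gauss_ge1 _ _ _ hA hB hC t ltac:(lra)).
  pose proof (is_derive_gauss _ _ _ hA hB hC t ltac:(lra)) as h0.
  pose proof (is_derive_gauss' _ _ _ hA hB hC t ltac:(lra)) as h1.
  pose proof (gauss_ode _ _ _ hA hB hC t ltac:(lra)) as ode.
  auto_derive; [repeat split; try (eexists; eassumption); lra |].
  rewrite (Derive_eta _ _ _ h0), (Derive_eta _ _ _ h1).
  set (F := gauss (1 + s1 + s2) B (1 + s1) t) in *.
  set (F' := gauss' (1 + s1 + s2) B (1 + s1) t) in *.
  set (F'' := gauss'' (1 + s1 + s2) B (1 + s1) t) in *.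
  replace F'' with ((B * F - ((1 + s1) - (1 + s1 + s2 + 1) * t) * F') / (t * (1 - t)))
    by (field_simplify_eq; [lra | split; lra]).
  field. repeat split; lra.
Qed.

Lemma riccati_le_of_ge t r e : 0 < e -> 1 / 2 <= t < 1 ->
  (1 - t) * (e * (s2 + e) + B) <= e ^ 2 / 2 -> s2 + e <= r -> riccati t r <= - (e ^ 2 / 2).
Proof.
  intros he ht hu hr. unfold riccati.
  set (u := 1 - t) in *. assert (hu' : 0 < u <= 1 / 2) by (unfold u; lra).
  replace t with (1 - u) by (unfold u; ring). clearbody u.
  assert (h1 : r * ((1 - u) * r - s2) >= (s2 + e) * ((1 - u) * (s2 + e) - s2)).
  { assert ((r - (s2 + e)) * ((1 - u) * (r + (s2 + e)) - s2) >= 0)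
      by (apply Rle_ge, Rmult_le_pos; nra).
    nra. }
  assert (h2 : u * (s2 + e) <= e / 2).
  { apply (Rmult_le_reg_l e); [lra|]. nra. }
  assert (h3 : (s2 + e) * (e - u * (s2 + e)) >= e * (e - u * (s2 + e)))
    by (apply Rle_ge, Rmult_le_compat_r; lra).
  assert (h4 : 0 <= (1 + s1 + s2) * u * r) by (repeat apply Rmult_le_pos; lra).
  nra.
Qed.

Lemma riccati_ge_of_le t r e : 0 < e -> 0 <= t < 1 ->
  (1 - t) * (1 + s1 + s2) <= e / 2 -> 0 < r <= s2 - e -> r * e / 2 <= riccati t r.
Proof.
  intros he ht hu hr. unfold riccati.
  replace ((1 + s1) - (1 + s1 + s2) * t) with (- s2 + (1 + s1 + s2) * (1 - t)) by ring.
  assert (t * r ^ 2 <= r ^ 2) by nra.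
  assert (0 <= (1 - t) * B) by (apply Rmult_le_pos; lra).
  assert (r * ((1 + s1 + s2) * (1 - t)) <= r * (e / 2)) by (apply Rmult_le_compat_l; lra).
  nra.
Qed.

Lemma ratio_lt_at_left e : 0 < e -> at_left 1 (fun t => ratio t < s2 + e).
Proof.
  intros he.
  destruct (exists_small_scale (e * (s2 + e) + B) (e ^ 2 / 2)) as [eta [heta hetaK]]; [nra | nra |].
  apply (at_left_lt_of_drift ratio (fun t => riccati t (ratio t) / (t * (1 - t)))
           (1 - eta) 1 _ (e ^ 2 / 2)); [lra | nra | |].
  - intros t ht. apply is_derive_ratio_riccati. lra.
  - intros t ht hr. apply Rdiv_le_opp_div; [| nra | split; nra].
    apply riccati_le_of_ge; [lra | lra | | lra].
    apply Rle_trans with (eta * (e * (s2 + e) + B)); [apply Rmult_le_compat_r; nra | lra].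
Qed.

Lemma neg_ln_ratio_lt_at_left e : 0 < e -> 0 < s2 - e ->
  at_left 1 (fun t => - ln (ratio t) < - ln (s2 - e)).
Proof.
  intros he hL.
  destruct (exists_small_scale (1 + s1 + s2) (e / 2)) as [eta [heta hetaK]]; [lra | lra |].
  apply (at_left_lt_of_drift (fun t => - ln (ratio t))
           (fun t => - (riccati t (ratio t) / ratio t) / (t * (1 - t))) (1 - eta) 1 _ (e / 2));
    [lra | lra | |].
  - intros t ht.
    pose proof (ratio_pos t ltac:(lra)) as hr.
    pose proof (is_derive_ratio_riccati t ltac:(lra)) as hd.
    auto_derive; [repeat split; [eexists; exact hd | lra] |].
    rewrite (Derive_eta _ _ _ hd). field. repeat split; lra.
  - intros t ht hlnt.
    pose proof (ratio_pos t ltac:(lra)) as hr.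
    assert (hle : ratio t <= s2 - e).
    { destruct (Rle_lt_dec (ratio t) (s2 - e)) as [h | h]; [exact h |].
      pose proof (ln_increasing (s2 - e) (ratio t) hL h). lra. }
    apply Rdiv_le_opp_div; [| lra | split; nra].
    apply Ropp_le_contravar, (Rmult_le_reg_r (ratio t)); [lra|].
    replace (riccati t (ratio t) / ratio t * ratio t) with (riccati t (ratio t)) by (field; lra).
    replace (e / 2 * ratio t) with (ratio t * e / 2) by field.
    apply riccati_ge_of_le; [lra | lra | | lra].
    apply Rle_trans with (eta * (1 + s1 + s2)); [apply Rmult_le_compat_r | ]; lra.
Qed.

Lemma ratio_gt_at_left e : 0 < e -> at_left 1 (fun t => s2 - e < ratio t).
Proof.
  intros he.
  assert (hpos : at_left 1 (fun t => 0 < ratio t)).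
  { apply (at_left_of_interval _ 0); [lra|]. intros t ht. apply ratio_pos. lra. }
  destruct (Rle_or_lt (s2 - e) 0) as [hle | hL].
  { eapply filter_imp; [| exact hpos]. simpl. intros t ht. lra. }
  eapply filter_imp; [| exact (filter_and _ _ hpos (neg_ln_ratio_lt_at_left e he hL))].
  simpl. intros t [hr ht]. apply Ropp_lt_cancel, ln_lt_inv in ht; lra.
Qed.

Lemma filterlim_ratio_1 : filterlim ratio (at_left 1) (locally s2).
Proof.
  apply filterlim_locally. intros eps.
  eapply filter_imp; [| exact (filter_and _ _ (ratio_lt_at_left eps (cond_pos eps))
                                            (ratio_gt_at_left eps (cond_pos eps)))].
  intros t ht. change (Rabs (ratio t - s2) < eps). apply Rabs_def1; lra.
Qed.

End Ratio.

Definition U0 s1 s2 x := (1 + s1) * (1 - x) - (1 + s2) * (1 + x).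

Definition Wsol s1 s2 B x := U0 s1 s2 x + 2 * (1 + x) * ratio s1 s2 B ((1 + x) / 2).

Section Explicit.

Variables s1 s2 B : R.
Hypotheses (hs1 : 0 <= s1) (hs2 : 0 <= s2) (hB : 0 < B).

Lemma Wsol_ode x : -1 < x < 1 -> exists d, is_derive (Wsol s1 s2 B) x d /\
  (1 - x ^ 2) * d + 2 * x * Wsol s1 s2 B x + / 2 * Wsol s1 s2 B x ^ 2
  = Pc (s1 ^ 2 - 1) (s2 ^ 2 - 1) (2 * B - / 2 * (s1 + s2) * (s1 + s2 + 2)) x.
Proof.
  intros hx. set (t := (1 + x) / 2).
  pose proof (is_derive_ratio_riccati s1 s2 B hs1 hs2 hB t ltac:(unfold t; lra)) as hd.
  eexists. split.
  - unfold Wsol, U0. auto_derive; [eexists; exact hd |].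
    change ((1 + x) * / 2) with t. rewrite (Derive_eta _ _ _ hd). reflexivity.
  - unfold Wsol, U0, Pc, riccati, t. field. lra.
Qed.

Lemma ex_derive_Wsol_m1 : ex_derive (Wsol s1 s2 B) (-1).
Proof.
  pose proof (ex_derive_ratio s1 s2 B hs1 hs2 hB 0 ltac:(lra)).
  unfold Wsol, U0. auto_derive. now replace ((1 + -1) * / 2) with 0 by field.
Qed.

Lemma Wsol_m1 : Wsol s1 s2 B (-1) = 2 + 2 * s1.
Proof. unfold Wsol, U0. ring. Qed.

Lemma filterlim_Wsol_1 : filterlim (Wsol s1 s2 B) (at_left 1) (locally (-2 + 2 * s2)).
Proof.
  assert (hR : filterlim (fun x => ratio s1 s2 B ((1 + x) / 2)) (at_left 1) (locally s2))
    by exact (filterlim_comp _ _ _ _ _ _ _ _ (filterlim_at_left_avg 1)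
                (filterlim_ratio_1 s1 s2 B hs1 hs2 hB)).
  assert (hU0 := filterlim_at_left_continuous (U0 s1 s2) 1 ltac:(unfold U0; auto_derive; easy)).
  assert (hlin := filterlim_at_left_continuous (fun x => 2 * (1 + x)) 1 ltac:(auto_derive; easy)).
  replace (-2 + 2 * s2) with (U0 s1 s2 1 + 2 * (1 + 1) * s2) by (unfold U0; ring).
  unfold Wsol. eapply filterlim_comp_2; [exact hU0 | | exact (filterlim_plus _ _)].
  eapply filterlim_comp_2; [exact hlin | exact hR | exact (filterlim_mult _ _)].
Qed.

Lemma U0_lt_Wsol x : -1 < x < 1 -> U0 s1 s2 x < Wsol s1 s2 B x.
Proof.
  intros hx. unfold Wsol.
  pose proof (ratio_pos s1 s2 B hs1 hs2 hB ((1 + x) / 2) ltac:(lra)).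
  assert (0 < 2 * (1 + x) * ratio s1 s2 B ((1 + x) / 2)) by (apply Rmult_lt_0_compat; lra).
  lra.
Qed.

End Explicit.

Definition linear_limit_m1 (Y : R -> R) (tau : R) : Prop :=
  exists M d, 0 < d /\ forall x, -1 < x < -1 + d -> Rabs (Y x - tau) <= M * (1 + x).

Lemma linear_limit_m1_of_ex_derive (f : R -> R) : ex_derive f (-1) -> linear_limit_m1 f (f (-1)).
Proof.
  intros [l hf]. destruct (is_derive_lipschitz_at f (-1) l hf) as [M [d [hd hM]]].
  exists M, d. split; [exact hd|]. intros x hx.
  replace (1 + x) with (Rabs (x - -1)) by (rewrite Rabs_pos_eq; lra).
  apply hM. rewrite Rabs_pos_eq; lra.
Qed.

Lemma linear_limit_m1_ext (Y Z : R -> R) tau d : 0 < d ->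
  (forall x, -1 < x < -1 + d -> Y x = Z x) -> linear_limit_m1 Z tau -> linear_limit_m1 Y tau.
Proof.
  intros hd hYZ [M [d' [hd' hM]]]. exists M, (Rmin d d'). split; [now apply Rmin_pos|].
  intros x hx. pose proof (Rmin_l d d'). pose proof (Rmin_r d d').
  rewrite hYZ by lra. apply hM. lra.
Qed.

Lemma linear_limit_m1_pseries (a : nat -> R) (Y : R -> R) d : 0 < d ->
  (forall x, -1 < x < -1 + d -> is_pseries a (x + 1) (Y x)) -> linear_limit_m1 Y (a 0%nat).
Proof.
  intros hd hY.
  assert (hr : Rbar_lt (Rabs (-1 + 1)) (CV_radius a)).
  { replace (-1 + 1) with 0 by ring. rewrite Rabs_R0.
    apply (CV_radius_pos_of_is_pseries a (d / 2) (Y (-1 + d / 2))); [lra|].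
    replace (d / 2) with (-1 + d / 2 + 1) at 1 by ring. apply hY. lra. }
  apply (linear_limit_m1_ext _ (fun x => PSeries a (x + 1)) _ d hd).
  - intros x hx. symmetry. apply is_pseries_unique, hY, hx.
  - rewrite <- (PSeries_0 a). replace 0 with (-1 + 1) by ring.
    apply (linear_limit_m1_of_ex_derive (fun x => PSeries a (x + 1))).
    auto_derive. now apply ex_derive_PSeries.
Qed.

Definition riccati_field c1 c2 c3 x y := (Pc c1 c2 c3 x - 2 * x * y - / 2 * y ^ 2) / (1 - x ^ 2).

Lemma solves_on_is_derive c1 c2 c3 Y l r x : -1 <= l -> r <= 1 -> l < x < r ->
  solves_on c1 c2 c3 Y l r -> is_derive Y x (riccati_field c1 c2 c3 x (Y x)).
Proof.
  intros hl hr hx hY. destruct (hY x hx) as [d [hd hode]].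
  enough (e : riccati_field c1 c2 c3 x (Y x) = d :> R) by (rewrite e; exact hd).
  unfold riccati_field. rewrite <- hode. field. nra.
Qed.

Definition diff_rate (Y1 Y2 : R -> R) x := - (4 * x + Y1 x + Y2 x) / (1 - x ^ 2).

Lemma is_derive_sq_diff c1 c2 c3 Y1 Y2 l r x : -1 <= l -> r <= 1 -> l < x < r ->
  solves_on c1 c2 c3 Y1 l r -> solves_on c1 c2 c3 Y2 l r ->
  is_derive (fun s => (Y1 s - Y2 s) ^ 2) x (diff_rate Y1 Y2 x * (Y1 x - Y2 x) ^ 2).
Proof.
  intros hl hr hx h1 h2.
  pose proof (solves_on_is_derive c1 c2 c3 Y1 l r x hl hr hx h1) as d1.
  pose proof (solves_on_is_derive c1 c2 c3 Y2 l r x hl hr hx h2) as d2.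
  auto_derive; [repeat split; eexists; eassumption |].
  rewrite (Derive_eta _ _ _ d1), (Derive_eta _ _ _ d2).
  unfold diff_rate, riccati_field. field. nra.
Qed.

(* Near [-1] the rate is bounded by [M1 + M2] because [tau >= 2]; elsewhere on
   [(-1, b]] it is continuous on a compact interval. *)
Lemma diff_rate_bounded c1 c2 c3 Y1 Y2 r tau b : r <= 1 -> 2 <= tau -> -1 < b < r ->
  solves_on c1 c2 c3 Y1 (-1) r -> solves_on c1 c2 c3 Y2 (-1) r ->
  linear_limit_m1 Y1 tau -> linear_limit_m1 Y2 tau ->
  exists K, forall s, -1 < s <= b -> diff_rate Y1 Y2 s <= K.
Proof.
  intros hr htau hb h1 h2 [M1 [d1 [hd1 hM1]]] [M2 [d2 [hd2 hM2]]].
  set (x1 := Rmin (Rmin d1 d2) 1 - 1).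
  assert (hx1 : -1 < x1 <= 0 /\ x1 <= -1 + d1 /\ x1 <= -1 + d2).
  { unfold x1. pose proof (Rmin_l (Rmin d1 d2) 1). pose proof (Rmin_r (Rmin d1 d2) 1).
    pose proof (Rmin_l d1 d2). pose proof (Rmin_r d1 d2).
    assert (0 < Rmin (Rmin d1 d2) 1) by (repeat apply Rmin_pos; lra). lra. }
  assert (near : forall s, -1 < s < x1 -> diff_rate Y1 Y2 s <= Rmax 0 (M1 + M2)).
  { intros s hs. specialize (hM1 s ltac:(lra)). specialize (hM2 s ltac:(lra)).
    apply Rabs_le_between in hM1. apply Rabs_le_between in hM2.
    unfold diff_rate. apply (Rmult_le_reg_r (1 - s ^ 2)); [nra|].
    replace (- (4 * s + Y1 s + Y2 s) / (1 - s ^ 2) * (1 - s ^ 2))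
      with (- (4 * s + Y1 s + Y2 s)) by (field; nra).
    pose proof (Rmax_l 0 (M1 + M2)). pose proof (Rmax_r 0 (M1 + M2)).
    assert (Rmax 0 (M1 + M2) * (1 + s) <= Rmax 0 (M1 + M2) * (1 - s ^ 2))
      by (apply Rmult_le_compat_l; nra).
    nra. }
  destruct (Rlt_or_le b x1) as [hbx | hxb].
  { exists (Rmax 0 (M1 + M2)). intros s hs. apply near. lra. }
  destruct (continuity_ab_maj (diff_rate Y1 Y2) x1 b hxb) as [m [hm _]].
  { intros s hs. apply continuity_pt_filterlim, (@ex_derive_continuous R_AbsRing).
    pose proof (solves_on_is_derive c1 c2 c3 Y1 (-1) r s ltac:(lra) hr ltac:(lra) h1).
    pose proof (solves_on_is_derive c1 c2 c3 Y2 (-1) r s ltac:(lra) hr ltac:(lra) h2).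
    unfold diff_rate. auto_derive. repeat split; try (eexists; eassumption). nra. }
  exists (Rmax (Rmax 0 (M1 + M2)) (diff_rate Y1 Y2 m)). intros s hs.
  destruct (Rlt_or_le s x1) as [hs1 | hs1].
  - eapply Rle_trans; [apply near; lra | apply Rmax_l].
  - eapply Rle_trans; [apply hm; lra | apply Rmax_r].
Qed.

Lemma le_0_of_le_mul_small (m C d : R) : 0 < d -> (forall u, 0 < u < d -> m <= C * u) -> m <= 0.
Proof.
  intros hd hm. destruct (Rle_or_lt m 0) as [h | h]; [exact h | exfalso].
  set (u := Rmin (d / 2) (m / (2 * (Rabs C + 1)))).
  assert (hu : 0 < u <= d / 2 /\ u * (Rabs C + 1) <= m / 2).
  { split; [split; [apply Rmin_pos; [lra | apply Rdiv_lt_0_compat; pose proof (Rabs_pos C); lra]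
                   | apply Rmin_l]|].
    apply Rle_trans with (m / (2 * (Rabs C + 1)) * (Rabs C + 1)).
    - apply Rmult_le_compat_r; [pose proof (Rabs_pos C); lra | apply Rmin_r].
    - right. field. pose proof (Rabs_pos C); lra. }
  specialize (hm u ltac:(lra)). pose proof (Rle_abs C).
  assert (C * u <= Rabs C * u) by (apply Rmult_le_compat_r; lra). nra.
Qed.

Lemma exp_le_compat x y : x <= y -> exp x <= exp y.
Proof.
  intros h. destruct (Rle_lt_or_eq_dec x y h) as [h' | ->]; [left; now apply exp_increasing | lra].
Qed.

Lemma sq_diff_le c1 c2 c3 Y1 Y2 r K a x : r <= 1 -> -1 < a <= x -> x < r ->
  solves_on c1 c2 c3 Y1 (-1) r -> solves_on c1 c2 c3 Y2 (-1) r ->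
  (forall s, a <= s <= x -> diff_rate Y1 Y2 s <= K) ->
  (Y1 x - Y2 x) ^ 2 <= (Y1 a - Y2 a) ^ 2 * exp (Rabs K * 2).
Proof.
  intros hr hax hx h1 h2 hK.
  eapply Rle_trans; [apply (gronwall (fun s => (Y1 s - Y2 s) ^ 2)
                             (fun s => diff_rate Y1 Y2 s * (Y1 s - Y2 s) ^ 2) K a x); [lra | |] |].
  - intros s hs. apply (is_derive_sq_diff c1 c2 c3 Y1 Y2 (-1) r); try lra; assumption.
  - intros s hs. apply Rmult_le_compat_r; [apply pow2_ge_0 | now apply hK].
  - apply Rmult_le_compat_l; [apply pow2_ge_0 | apply exp_le_compat].
    pose proof (Rle_abs K).
    assert (K * (x - a) <= Rabs K * (x - a)) by (apply Rmult_le_compat_r; lra).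
    assert (Rabs K * (x - a) <= Rabs K * 2) by (apply Rmult_le_compat_l; [apply Rabs_pos | lra]).
    lra.
Qed.

(* [(Y1 - Y2)^2] is [O((1 + a)^2)] at [a] and the Gronwall factor from [a] to [x]
   stays bounded as [a -> -1]. *)
Lemma solves_on_unique c1 c2 c3 Y1 Y2 r tau : r <= 1 -> 2 <= tau ->
  solves_on c1 c2 c3 Y1 (-1) r -> solves_on c1 c2 c3 Y2 (-1) r ->
  linear_limit_m1 Y1 tau -> linear_limit_m1 Y2 tau ->
  forall x, -1 < x < r -> Y1 x = Y2 x.
Proof.
  intros hr htau h1 h2 hl1 hl2 x hx.
  destruct (diff_rate_bounded c1 c2 c3 Y1 Y2 r tau x hr htau hx h1 h2 hl1 hl2) as [K hK].
  destruct hl1 as [M1 [d1 [hd1 hM1]]], hl2 as [M2 [d2 [hd2 hM2]]].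
  set (d := Rmin (Rmin (Rmin d1 d2) (x + 1)) 1).
  assert (hd : 0 < d /\ d <= d1 /\ d <= d2 /\ d <= x + 1 /\ d <= 1).
  { unfold d. pose proof (Rmin_l (Rmin (Rmin d1 d2) (x + 1)) 1).
    pose proof (Rmin_r (Rmin (Rmin d1 d2) (x + 1)) 1).
    pose proof (Rmin_l (Rmin d1 d2) (x + 1)). pose proof (Rmin_r (Rmin d1 d2) (x + 1)).
    pose proof (Rmin_l d1 d2). pose proof (Rmin_r d1 d2).
    split; [repeat apply Rmin_pos|]; lra. }
  enough ((Y1 x - Y2 x) ^ 2 <= 0) by nra.
  apply (le_0_of_le_mul_small _ ((M1 + M2) ^ 2 * exp (Rabs K * 2)) d); [lra|].
  intros u hu.
  specialize (hM1 (-1 + u) ltac:(lra)). specialize (hM2 (-1 + u) ltac:(lra)).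
  replace (1 + (-1 + u)) with u in hM1, hM2 by ring.
  assert (hdiff : Rabs (Y1 (-1 + u) - Y2 (-1 + u)) <= (M1 + M2) * u).
  { replace (Y1 (-1 + u) - Y2 (-1 + u)) with ((Y1 (-1 + u) - tau) - (Y2 (-1 + u) - tau)) by ring.
    eapply Rle_trans; [apply Rabs_triang|]. rewrite Rabs_Ropp. lra. }
  eapply Rle_trans; [apply (sq_diff_le c1 c2 c3 Y1 Y2 r K (-1 + u) x); try lra; try assumption |].
  { intros s hs. apply hK. lra. }
  rewrite <- (pow2_abs (Y1 (-1 + u) - Y2 (-1 + u))).
  pose proof (Rabs_pos (Y1 (-1 + u) - Y2 (-1 + u))). pose proof (exp_pos (Rabs K * 2)).
  assert (Rabs (Y1 (-1 + u) - Y2 (-1 + u)) ^ 2 <= (M1 + M2) ^ 2 * u) by nra.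
  nra.
Qed.

Lemma linear_limit_m1_pseries_mirror (b : nat -> R) (Y : R -> R) d : 0 < d ->
  (forall x, 1 - d < x < 1 -> is_pseries b (1 - x) (Y x)) ->
  linear_limit_m1 (fun y => - Y (- y)) (- b 0%nat).
Proof.
  intros hd hY. apply (linear_limit_m1_pseries (PS_opp b) _ d hd).
  intros y hy. replace (y + 1) with (1 - - y) by ring.
  exact (is_pseries_opp _ _ _ (hY (- y) ltac:(lra))).
Qed.

Lemma c3bar_comm c1 c2 : c3bar c2 c1 = c3bar c1 c2.
Proof. unfold c3bar. ring. Qed.

Lemma solves_on_mirror c1 c2 c3 (U : R -> R) l r : solves_on c1 c2 c3 U l r ->
  solves_on c2 c1 c3 (fun y => - U (- y)) (- r) (- l).
Proof.
  intros hU y hy. destruct (hU (- y) ltac:(lra)) as [d [hd hode]].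
  exists d. split.
  - auto_derive; [now exists d |]. rewrite (Derive_eta _ _ _ hd). ring.
  - unfold Pc in *. lra.
Qed.

Lemma solves_on_ext c1 c2 c3 (Y Z : R -> R) a b : solves_on c1 c2 c3 Y a b ->
  (forall x, a < x < b -> Z x = Y x) -> solves_on c1 c2 c3 Z a b.
Proof.
  intros hY hZ x hx. destruct (hY x hx) as [d [hd hode]].
  exists d. rewrite hZ by exact hx. split; [| exact hode].
  apply (is_derive_ext_loc Y); [| exact hd].
  assert (hr : 0 < Rmin (x - a) (b - x)) by (apply Rmin_pos; lra).
  exists (mkposreal _ hr). intros y hy. change (Rabs (y - x) < Rmin (x - a) (b - x)) in hy.
  pose proof (Rmin_l (x - a) (b - x)). pose proof (Rmin_r (x - a) (b - x)).
  apply Rabs_def2 in hy. symmetry. apply hZ. lra.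
Qed.

Lemma solves_on_patch c1 c2 c3 (W Y : R -> R) a b l r : solves_on c1 c2 c3 W a b ->
  (forall x, a < x < b -> l < x < r -> Y x = W x) ->
  exists V, solves_on c1 c2 c3 V a b /\ forall x, l < x < r -> V x = Y x.
Proof.
  intros hW hYW.
  exists (fun x => if Rlt_dec a x then if Rlt_dec x b then W x else Y x else Y x). split.
  - apply (solves_on_ext _ _ _ W); [exact hW|].
    intros x hx. destruct (Rlt_dec a x); [destruct (Rlt_dec x b) |]; [reflexivity | lra | lra].
  - intros x hx. destruct (Rlt_dec a x); [destruct (Rlt_dec x b) |]; try reflexivity.
    symmetry. now apply hYW.
Qed.

Definition Uplus c1 c2 c3 := Wsol (sqrt (1 + c1)) (sqrt (1 + c2)) ((c3 - c3bar c1 c2) / 2).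

Definition Uminus c1 c2 c3 x := - Uplus c2 c1 c3 (- x).

Lemma half_c3_gap_pos c1 c2 c3 : c3bar c1 c2 < c3 -> 0 < (c3 - c3bar c1 c2) / 2.
Proof. lra. Qed.

Lemma Uplus_solves c1 c2 c3 : -1 <= c1 -> -1 <= c2 -> c3bar c1 c2 < c3 ->
  solves_on c1 c2 c3 (Uplus c1 c2 c3) (-1) 1.
Proof.
  intros hc1 hc2 hc3 x hx.
  destruct (Wsol_ode _ _ _ (sqrt_pos (1 + c1)) (sqrt_pos (1 + c2))
              (half_c3_gap_pos _ _ _ hc3) x hx) as [d [hd hode]].
  exists d. split; [exact hd|]. unfold Uplus. rewrite hode.
  rewrite !pow2_sqrt by lra. unfold c3bar, Pc. field.
Qed.

Lemma Uminus_solves c1 c2 c3 : -1 <= c1 -> -1 <= c2 -> c3bar c1 c2 < c3 ->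
  solves_on c1 c2 c3 (Uminus c1 c2 c3) (-1) 1.
Proof.
  intros hc1 hc2 hc3. rewrite <- c3bar_comm in hc3.
  pose proof (solves_on_mirror c2 c1 c3 _ _ _ (Uplus_solves c2 c1 c3 hc2 hc1 hc3)) as h.
  intros x hx. apply h. lra.
Qed.

Lemma tau2_ge2 c : 2 <= tau2 c.
Proof. unfold tau2. pose proof (sqrt_pos (1 + c)). lra. Qed.

Lemma eq_Uplus c1 c2 c3 (Y : R -> R) r : -1 <= c1 -> -1 <= c2 -> c3bar c1 c2 < c3 -> r <= 1 ->
  solves_on c1 c2 c3 Y (-1) r -> linear_limit_m1 Y (tau2 c1) ->
  forall x, -1 < x < r -> Y x = Uplus c1 c2 c3 x.
Proof.
  intros hc1 hc2 hc3 hr hY hlim.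
  apply (solves_on_unique c1 c2 c3 _ _ r (tau2 c1) hr (tau2_ge2 c1) hY).
  - intros x hx. apply Uplus_solves; lra.
  - exact hlim.
  - unfold tau2. rewrite <- (Wsol_m1 (sqrt (1 + c1)) (sqrt (1 + c2)) ((c3 - c3bar c1 c2) / 2)).
    apply linear_limit_m1_of_ex_derive, ex_derive_Wsol_m1;
      [apply sqrt_pos | apply sqrt_pos | now apply half_c3_gap_pos].
Qed.

Lemma eq_Uminus c1 c2 c3 (Y : R -> R) l : -1 <= c1 -> -1 <= c2 -> c3bar c1 c2 < c3 -> -1 <= l ->
  solves_on c1 c2 c3 Y l 1 -> linear_limit_m1 (fun y => - Y (- y)) (tau2 c2) ->
  forall x, l < x < 1 -> Y x = Uminus c1 c2 c3 x.
Proof.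
  intros hc1 hc2 hc3 hl hY hlim x hx. rewrite <- c3bar_comm in hc3.
  assert (hYm : solves_on c2 c1 c3 (fun y => - Y (- y)) (-1) (- l)).
  { intros y hy. apply (solves_on_mirror _ _ _ _ _ _ hY). lra. }
  unfold Uminus. rewrite <- (eq_Uplus c2 c1 c3 _ (- l) hc2 hc1 hc3 ltac:(lra) hYm hlim (- x))
    by lra.
  now rewrite !Ropp_involutive.
Qed.

Lemma filterlim_Uplus_1 c1 c2 c3 (V : R -> R) : -1 <= c1 -> -1 <= c2 -> c3bar c1 c2 < c3 ->
  (forall x, -1 < x < 1 -> V x = Uplus c1 c2 c3 x) ->
  filterlim V (at_left 1) (locally (tau2' c2)).
Proof.
  intros hc1 hc2 hc3 hV.
  apply (filterlim_ext_loc (Uplus c1 c2 c3)).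
  - apply (at_left_of_interval _ 0); [lra|]. intros x hx. symmetry. apply hV. lra.
  - apply filterlim_Wsol_1; [apply sqrt_pos | apply sqrt_pos | now apply half_c3_gap_pos].
Qed.

Lemma filterlim_Uminus_m1 c1 c2 c3 (V : R -> R) : -1 <= c1 -> -1 <= c2 -> c3bar c1 c2 < c3 ->
  (forall x, -1 < x < 1 -> V x = Uminus c1 c2 c3 x) ->
  filterlim V (at_right (-1)) (locally (tau1 c1)).
Proof.
  intros hc1 hc2 hc3 hV. rewrite <- c3bar_comm in hc3.
  apply (filterlim_ext_loc (Uminus c1 c2 c3)).
  - apply (at_right_of_interval _ _ 0); [lra|]. intros x hx. symmetry. apply hV. lra.
  - replace (tau1 c1) with (- tau2' c1) by (unfold tau1, tau2'; ring).
    unfold Uminus.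
    apply (filterlim_comp _ _ _ (fun x => Uplus c2 c1 c3 (- x)) Ropp _ (locally (tau2' c1)));
      [| exact (filterlim_opp _)].
    apply (filterlim_comp _ _ _ Ropp (Uplus c2 c1 c3) _ (at_left 1)).
    + pose proof (filterlim_Ropp_right (-1)) as h. now replace (- -1) with 1 in h by ring.
    + now apply (filterlim_Uplus_1 c2 c1 c3).
Qed.

Lemma Uminus_lt_Uplus c1 c2 c3 x : -1 <= c1 -> -1 <= c2 -> c3bar c1 c2 < c3 -> -1 < x < 1 ->
  Uminus c1 c2 c3 x < Uplus c1 c2 c3 x.
Proof.
  intros hc1 hc2 hc3 hx. unfold Uminus, Uplus.
  pose proof (U0_lt_Wsol _ _ _ (sqrt_pos (1 + c1)) (sqrt_pos (1 + c2))
                (half_c3_gap_pos _ _ _ hc3) x hx).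
  rewrite <- c3bar_comm in hc3.
  pose proof (U0_lt_Wsol _ _ _ (sqrt_pos (1 + c2)) (sqrt_pos (1 + c1))
                (half_c3_gap_pos _ _ _ hc3) (- x) ltac:(lra)).
  unfold U0 in *. lra.
Qed.

Lemma Uplus_extends c1 c2 c3 (Y : R -> R) d : -1 <= c1 -> -1 <= c2 -> c3bar c1 c2 < c3 -> 0 < d ->
  solves_on c1 c2 c3 Y (-1) (-1 + d) -> linear_limit_m1 Y (tau2 c1) ->
  exists V, solves_on c1 c2 c3 V (-1) 1 /\ forall x, -1 < x < -1 + d -> V x = Y x.
Proof.
  intros hc1 hc2 hc3 hd hY hlim.
  apply solves_on_patch with (Uplus c1 c2 c3); [now apply Uplus_solves |].
  intros x hx hx'. pose proof (Rmin_l (-1 + d) 1). pose proof (Rmin_r (-1 + d) 1).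
  apply (eq_Uplus c1 c2 c3 Y (Rmin (-1 + d) 1)); auto.
  - intros y hy. apply hY. lra.
  - split; [lra | apply Rmin_glb_lt; lra].
Qed.

Lemma Uminus_extends c1 c2 c3 (Y : R -> R) d : -1 <= c1 -> -1 <= c2 -> c3bar c1 c2 < c3 -> 0 < d ->
  solves_on c1 c2 c3 Y (1 - d) 1 -> linear_limit_m1 (fun y => - Y (- y)) (tau2 c2) ->
  exists V, solves_on c1 c2 c3 V (-1) 1 /\ forall x, 1 - d < x < 1 -> V x = Y x.
Proof.
  intros hc1 hc2 hc3 hd hY hlim.
  apply solves_on_patch with (Uminus c1 c2 c3); [now apply Uminus_solves |].
  intros x hx hx'. pose proof (Rmax_l (1 - d) (-1)). pose proof (Rmax_r (1 - d) (-1)).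
  apply (eq_Uminus c1 c2 c3 Y (Rmax (1 - d) (-1))); auto.
  - intros y hy. apply hY. lra.
  - split; [apply Rmax_lub_lt; lra | lra].
Qed.

Theorem lemma2p7 (c1 c2 c3 : R) (hc1 : -1 <= c1) (hc2 : -1 <= c2)
  (hc3 : c3bar c1 c2 < c3)
  (Up : R -> R) (dp : R) (a : nat -> R)
  (hdp : 0 < dp) (ha0 : a 0%nat = tau2 c1)
  (hUp_ser : forall x, -1 < x < -1 + dp -> is_pseries a (x + 1) (Up x))
  (hUp_sol : solves_on c1 c2 c3 Up (-1) (-1 + dp))
  (Um : R -> R) (dm : R) (b : nat -> R)
  (hdm : 0 < dm) (hb0 : b 0%nat = tau1' c2)
  (hUm_ser : forall x, 1 - dm < x < 1 -> is_pseries b (1 - x) (Um x))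
  (hUm_sol : solves_on c1 c2 c3 Um (1 - dm) 1) :
  (* U^+ and U^- extend to solutions on (-1,1) *)
  (exists Vp : R -> R, solves_on c1 c2 c3 Vp (-1) 1 /\
     forall x, -1 < x < -1 + dp -> Vp x = Up x) /\
  (exists Vm : R -> R, solves_on c1 c2 c3 Vm (-1) 1 /\
     forall x, 1 - dm < x < 1 -> Vm x = Um x) /\
  (* any such extensions have the stated boundary values and are ordered *)
  (forall Vp Vm : R -> R,
     solves_on c1 c2 c3 Vp (-1) 1 ->
     (forall x, -1 < x < -1 + dp -> Vp x = Up x) ->
     solves_on c1 c2 c3 Vm (-1) 1 ->
     (forall x, 1 - dm < x < 1 -> Vm x = Um x) ->
     filterlim Vp (at_left 1) (locally (tau2' c2)) /\
     filterlim Vm (at_right (-1)) (locally (tau1 c1)) /\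
     (forall x, -1 < x < 1 -> Vm x < Vp x)).
Proof.
  assert (hp : linear_limit_m1 Up (tau2 c1))
    by (rewrite <- ha0; exact (linear_limit_m1_pseries a Up dp hdp hUp_ser)).
  assert (hm : linear_limit_m1 (fun y => - Um (- y)) (tau2 c2)).
  { replace (tau2 c2) with (- b 0%nat) by (rewrite hb0; unfold tau1', tau2; ring).
    exact (linear_limit_m1_pseries_mirror b Um dm hdm hUm_ser). }
  split; [| split]; [now apply Uplus_extends | now apply Uminus_extends |].
  intros Vp Vm hVp hVpUp hVm hVmUm.
  assert (hVp' : forall x, -1 < x < 1 -> Vp x = Uplus c1 c2 c3 x).
  { apply (eq_Uplus c1 c2 c3 Vp 1); auto; [lra|].
    exact (linear_limit_m1_ext Vp Up _ dp hdp hVpUp hp). }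
  assert (hVm' : forall x, -1 < x < 1 -> Vm x = Uminus c1 c2 c3 x).
  { apply (eq_Uminus c1 c2 c3 Vm (-1)); auto; [lra|].
    apply (linear_limit_m1_ext _ (fun y => - Um (- y)) _ dm hdm); [| exact hm].
    intros y hy. now rewrite hVmUm by lra. }
  split; [| split].
  - now apply (filterlim_Uplus_1 c1 c2 c3).
  - now apply (filterlim_Uminus_m1 c1 c2 c3).
  - intros x hx. rewrite hVp', hVm' by exact hx. now apply Uminus_lt_Uplus.
Qed.
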